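(* Let $G(n,n_1,\dots,n_L,p_1,\dots,p_L)$ be a multi-layer stochastic block model network satisfying the standing assumptions below, let $\mathcal{L}$ be its set of layers, fix a target layer $l^*\in\mathcal{L}$ and let $\mathcal{L}'=\mathcal{L}\setminus\{l^*\}$. If a suitable reducing method is applied to all communities of the layers in $\mathcal{L}'$, then the (expected) modularity of the partition $l^*$ increases.
   Context: Multi-layer stochastic block model $G(n,n_1,\dots,n_L,p_1,\dots,p_L)$: a random graph on $n$ nodes with $L$ layers. For each layer $l$ the nodes are partitioned into $n_l$ planted communities of size $s_l=n/n_l$; independently for each layer, each pair of nodes in a common community of layer $l$ receives an edge from layer $l$ with probability $p_l$; the graph is the simple union of all generated edges. The layers' partitions are independent, a pair of nodes lying in a common community of layer $l$ with probability $1/n_l$ independently over layers (self-pairs allowed for convenience); for $k\ge2$ distinct layers and one community from each, the intersection has $n/(n_{l_1}\cdots n_{l_k})$ nodes in expectation. Standing assumptions: $n_l\ge4$, $p_l\in[0.05,1]$, $n\ge2\prod_l n_l$. Notation: for $T\subseteq\mathcal{L}$, $P(T)=1-\prod_{l\in T}(1-p_l)$ is the probability that some layer in $T$ generates an edge on a pair internal to all layers of $T$ (with $P(\emptyset)=0$). A reducing method applied to the layers of $\mathcal{L}'$ is described by $K:2^{\mathcal{L}'}\to[0,1]$, where $K(T)$ is the probability that an edge on a pair of nodes internal to exactly the layers $T$ among $\mathcal{L}'$ is kept; it is called suitable if for all $T,T'\subseteq\mathcal{L}'$, $P(T)\le P(T')$ implies $K(T)\ge K(T')$. Modularity of layer $l^*$: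 with $e$ edges, $Q=\sum_i\big(\frac{e^i_{in}}{e}-(\frac{d^i}{2e})^2\big)$ over communities $i$ of $l^*$, $e^i_{in}$ the internal edges, $e^i_{out}$ the edges with exactly one endpoint in $i$, $d^i=2e^i_{in}+e^i_{out}$, all counts replaced by their expected values. *)

From HB Require Import structures.
From mathcomp Require Import all_boot all_order all_algebra.
Set Implicit Arguments. Unset Strict Implicit. Unset Printing Implicit Defensive.
Import Order.TTheory GRing.Theory Num.Theory.
Local Open Scope ring_scope.

Section MLSBM.
Variables (R : realFieldType) (Lay : finType).

Definition Pedge (p : Lay -> R) (T : {set Lay}) : R :=
  1 - \prod_(l in T) (1 - p l).

Definition reducing_method (Lp : {set Lay}) (K : {set Lay} -> R) : Prop :=
  forall T : {set Lay}, T \subset Lp -> 0 <= K T <= 1.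

Definition suitable (p : Lay -> R) (Lp : {set Lay}) (K : {set Lay} -> R) : Prop :=
  forall T T' : {set Lay}, T \subset Lp -> T' \subset Lp ->
    Pedge p T <= Pedge p T' -> K T' <= K T.

(* Probability that a pair of nodes lies in a common community of exactly the
   layers T among the layers U (independent layers, probability 1/n_l each). *)
Definition layer_wt (nl : Lay -> nat) (U T : {set Lay}) : R :=
  (\prod_(l in T) ((nl l)%:R)^-1) * \prod_(l in U :\: T) (1 - ((nl l)%:R)^-1).

(* Expected (kept) edge indicator of a pair which is internal (inside = true)
   resp. not internal (inside = false) to the target layer lstar; the other
   layers Lp = L \ {lstar} are random, K applied to the exact set T of layers of
   Lp to which the pair is internal. *)
Definition edge_exp (nl : Lay -> nat) (p : Lay -> R) (lstar : Lay)
    (K : {set Lay} -> R) (inside : bool) : R :=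
  let Lp := [set: Lay] :\ lstar in
  \sum_(T : {set Lay} | T \subset Lp)
     layer_wt nl Lp T * Pedge p (if inside then lstar |: T else T) * K T.

(* Modularity of a partition into k communities, from (expected) counts
   e_in^i and e_out^i; e = total number of edges = sum e_in + (sum e_out)/2,
   d^i = 2 e_in^i + e_out^i. *)
Definition modularity (k : nat) (ein eout : 'I_k -> R) : R :=
  let e := \sum_(i < k) ein i + (\sum_(i < k) eout i) / 2%:R in
  \sum_(i < k) (ein i / e - ((2%:R * ein i + eout i) / (2%:R * e)) ^+ 2).

(* Community i of lstar has size s = n / n_lstar;
   it contains s^2/2 node pairs (self-pairs allowed) and s(n-s) pairs with
   exactly one endpoint in it. *)
Definition sbm_modularity (n : nat) (nl : Lay -> nat) (p : Lay -> R)
    (lstar : Lay) (K : {set Lay} -> R) : R :=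
  let s : R := n%:R / (nl lstar)%:R in
  modularity (k := nl lstar)
    (fun _ => s ^+ 2 / 2%:R * edge_exp nl p lstar K true)
    (fun _ => s * (n%:R - s) * edge_exp nl p lstar K false).

End MLSBM.

From HB Require Import structures.
From mathcomp Require Import all_boot all_order all_algebra.
From mathcomp Require Import ring lra.
Import Order.TTheory GRing.Theory Num.Theory.
Local Open Scope ring_scope.

(* With k identical communities, Q = 2x/(2x+y) - 1/k, where x and y are the
   expected internal and outgoing edge counts of one community; so Q increases
   with x/y, which is proportional to a/b, the ratio of the expected kept-edge
   indicators of a pair inside resp. outside a community of the target layer.
   Conditioning on the set T of other layers sharing the pair, with weights
   w(T), gives b = Σ w P K and a = q Σ w K + (1 - q) b, where q is the edge
   probability of the target layer.  Hence a/b does not decrease under the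
   reduction as soon as (Σ w)(Σ w P K) <= (Σ w K)(Σ w P), which is Chebyshev's
   sum inequality: a suitable K is ordered oppositely to P. *)

Lemma chebyshev_sum_le (R : realDomainType) (I : finType) (P : pred I)
    (w f g : I -> R) :
  (forall i, P i -> 0 <= w i) ->
  (forall i j, P i -> P j -> (f i - f j) * (g i - g j) <= 0) ->
  (\sum_(i | P i) w i) * (\sum_(i | P i) w i * g i * f i) <=
  (\sum_(i | P i) w i * f i) * (\sum_(i | P i) w i * g i).
Proof.
move=> w_ge0 fg_anti.
set W := \sum_(i | P i) w i; set WGF := \sum_(i | P i) w i * g i * f i.
set WF := \sum_(i | P i) w i * f i; set WG := \sum_(i | P i) w i * g i.
have row_sum i : \sum_(j | P j) w i * w j * ((f i - f j) * (g i - g j)) =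
    w i * g i * f i * W + w i * WGF - w i * f i * WG - w i * g i * WF.
  rewrite /W /WGF /WG /WF !mulr_sumr -big_split -!sumrB /=.
  by apply: eq_bigr => j _; ring.
have double_sum_le0 :
    \sum_(i | P i) \sum_(j | P j) w i * w j * ((f i - f j) * (g i - g j)) <= 0.
  apply: sumr_le0 => i Pi; apply: sumr_le0 => j Pj.
  by rewrite -mulrA mulr_ge0_le0 ?w_ge0 // mulr_ge0_le0 ?w_ge0 ?fg_anti.
(* The double sum equals 2 (W WGF - WF WG). *)
move: double_sum_le0; rewrite (eq_bigr _ (fun i _ => row_sum i)).
rewrite !sumrB big_split /= -!mulr_suml -/W -/WGF -/WF -/WG.
by move=> ?; nra.
Qed.

Lemma modularity_uniform (R : realFieldType) (k : nat) (x y : R) :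
  (0 < k)%N -> 2%:R * x + y != 0 ->
  modularity (k := k) (fun _ => x) (fun _ => y) =
  2%:R * x / (2%:R * x + y) - k%:R^-1.
Proof.
move=> k_gt0 d_neq0; have k_neq0 : k%:R != 0 :> R by rewrite pnatr_eq0 -lt0n.
rewrite /modularity !sumr_const card_ord.
rewrite -[x *+ k]mulr_natr -[y *+ k]mulr_natr -[(_ - _) *+ k]mulr_natr.
field; rewrite k_neq0 d_neq0 /=.
have -> : x * k%:R * 2 + y * k%:R = k%:R * (2 * x + y) by ring.
by rewrite mulf_neq0.
Qed.

Lemma ler_modularity_uniform (R : realFieldType) (k : nat) (x1 y1 x2 y2 : R) :
  (0 < k)%N -> 0 < x1 -> 0 <= y1 -> 0 < x2 -> 0 <= y2 -> x1 * y2 <= x2 * y1 ->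
  modularity (k := k) (fun _ => x1) (fun _ => y1) <=
  modularity (k := k) (fun _ => x2) (fun _ => y2).
Proof.
move=> k_gt0 x1_gt0 y1_ge0 x2_gt0 y2_ge0 x12.
have d1_gt0 : 0 < 2%:R * x1 + y1 by lra.
have d2_gt0 : 0 < 2%:R * x2 + y2 by lra.
rewrite !modularity_uniform ?gt_eqF // lerD2r.
by rewrite ler_pdivrMr // mulrAC ler_pdivlMr //; nra.
Qed.

Lemma Pedge_setU1 (R : realFieldType) (Lay : finType) (p : Lay -> R)
    (l : Lay) (T : {set Lay}) :
  l \notin T -> Pedge p (l |: T) = p l + (1 - p l) * Pedge p T.
Proof. by move=> lNT; rewrite /Pedge big_setU1 //=; ring. Qed.

Lemma Pedge_ge0 (R : realFieldType) (Lay : finType) (p : Lay -> R)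
    (T : {set Lay}) :
  (forall l, 0 <= p l <= 1) -> 0 <= Pedge p T.
Proof.
move=> p01; rewrite subr_ge0; apply: prodr_ile1 => l _.
by have /andP[] := p01 l; lra.
Qed.

Lemma layer_wt_gt0 (R : realFieldType) (Lay : finType) (nl : Lay -> nat)
    (U T : {set Lay}) :
  (forall l, (1 < nl l)%N) -> 0 < layer_wt R nl U T.
Proof.
move=> nl_gt1; have nl_gt0 l : 0 < (nl l)%:R :> R by rewrite ltr0n ltnW.
apply: mulr_gt0; apply: prodr_gt0 => l _; first by rewrite invr_gt0.
by rewrite subr_gt0 invf_lt1 // ltr1n.
Qed.

Section ExpectedEdges.
Variables (R : realFieldType) (Lay : finType) (nl : Lay -> nat) (p : Lay -> R).
Variable lstar : Lay.
Hypothesis nl_gt1 : forall l, (1 < nl l)%N.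
Hypothesis p01 : forall l, 0 <= p l <= 1.

Local Notation Lp := ([set: Lay] :\ lstar).
Local Notation w := (layer_wt R nl Lp).
Local Notation a K := (edge_exp nl p lstar K true).
Local Notation b K := (edge_exp nl p lstar K false).

Lemma edge_exp_inside (K : {set Lay} -> R) :
  a K = p lstar * \sum_(T : {set Lay} | T \subset Lp) w T * K T
        + (1 - p lstar) * b K.
Proof.
rewrite /edge_exp /= !mulr_sumr -big_split /=; apply: eq_bigr => T TLp.
have lstarNT : lstar \notin T by apply/negP => /(subsetP TLp); rewrite !inE eqxx.
by rewrite Pedge_setU1 //; ring.
Qed.

Lemma edge_exp_outside_ge0 (K : {set Lay} -> R) :
  (forall T : {set Lay}, T \subset Lp -> 0 <= K T) -> 0 <= b K.
Proof.
move=> K_ge0; apply: sumr_ge0 => T TLp.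
by rewrite mulr_ge0 ?K_ge0 // mulr_ge0 ?Pedge_ge0 // ltW ?layer_wt_gt0.
Qed.

Lemma edge_exp_inside_gt0 (K : {set Lay} -> R) :
  0 < p lstar -> (forall T : {set Lay}, T \subset Lp -> 0 <= K T) ->
  (exists2 T : {set Lay}, T \subset Lp & 0 < K T) -> 0 < a K.
Proof.
move=> p_gt0 K_ge0 [T0 T0Lp KT0_gt0]; rewrite edge_exp_inside.
have p_le1 : 0 <= 1 - p lstar by have /andP[] := p01 lstar; lra.
apply: ltr_pwDl; last by rewrite mulr_ge0 ?edge_exp_outside_ge0.
apply: mulr_gt0 => //; rewrite (bigD1 T0) //=.
apply: ltr_pwDl; first by rewrite mulr_gt0 ?layer_wt_gt0.
by apply: sumr_ge0 => T /andP[TLp _]; rewrite mulr_ge0 ?K_ge0 // ltW ?layer_wt_gt0.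
Qed.

Lemma edge_exp_ratio_le (K : {set Lay} -> R) :
  0 <= p lstar -> suitable p Lp K ->
  a (fun _ => 1) * b K <= a K * b (fun _ => 1).
Proof.
move=> p_ge0 K_suit.
have cheb : (\sum_(T : {set Lay} | T \subset Lp) w T) * b K <=
            (\sum_(T : {set Lay} | T \subset Lp) w T * K T) * b (fun _ => 1).
  rewrite /edge_exp /=; under [X in _ <= _ * X]eq_bigr do rewrite mulr1.
  apply: chebyshev_sum_le => [T _ | T T' TLp T'Lp].
    by rewrite ltW ?layer_wt_gt0.
  have [PTT'|PT'T] := lerP (Pedge p T) (Pedge p T').
    by have := K_suit _ _ TLp T'Lp PTT'; nra.
  by have := K_suit _ _ T'Lp TLp (ltW PT'T); nra.
rewrite !edge_exp_inside; under eq_bigr do rewrite mulr1.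
by have := ler_wpM2l p_ge0 cheb; nra.
Qed.

Lemma ler_sbm_modularity (n : nat) (K1 K2 : {set Lay} -> R) :
  (0 < n)%N -> 0 < a K1 -> 0 <= b K1 -> 0 < a K2 -> 0 <= b K2 ->
  a K1 * b K2 <= a K2 * b K1 ->
  sbm_modularity n nl p lstar K1 <= sbm_modularity n nl p lstar K2.
Proof.
move=> n_gt0 a1_gt0 b1_ge0 a2_gt0 b2_ge0 ab12.
have k_gt0 : (0 < nl lstar)%N by rewrite ltnW.
rewrite /sbm_modularity /=; set s : R := n%:R / (nl lstar)%:R.
have s_gt0 : 0 < s by rewrite divr_gt0 ?ltr0n.
have c_ge0 : 0 <= n%:R - s.
  by rewrite subr_ge0 ler_pdivrMr ?ltr0n // ler_peMr ?ler0n ?ler1n.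
have x_gt0 x : 0 < x -> 0 < s ^+ 2 / 2%:R * x.
  by move=> x_gt0; rewrite !mulr_gt0 ?exprn_gt0 ?invr_gt0 ?ltr0n.
have y_ge0 y : 0 <= y -> 0 <= s * (n%:R - s) * y.
  by move=> y_ge0; rewrite mulr_ge0 // mulr_ge0 // ltW.
apply: ler_modularity_uniform; rewrite ?x_gt0 ?y_ge0 //.
rewrite mulrACA [X in _ <= X]mulrACA; apply: ler_wpM2l => //.
by rewrite mulr_ge0 ?mulr_ge0 ?exprn_ge0 ?invr_ge0 ?ler0n // ltW.
Qed.

End ExpectedEdges.

Theorem theorem16 (R : realFieldType) (Lay : finType) (n : nat)
    (nl : Lay -> nat) (p : Lay -> R) (lstar : Lay) (K : {set Lay} -> R) :
  (forall l, (4 <= nl l)%N) ->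
  (forall l, 20%:R^-1 <= p l <= 1) ->
  (2 * \prod_(l : Lay) nl l <= n)%N ->
  reducing_method ([set: Lay] :\ lstar) K ->
  suitable p ([set: Lay] :\ lstar) K ->
  (exists T : {set Lay}, T \subset [set: Lay] :\ lstar /\ 0 < K T) ->
  sbm_modularity n nl p lstar (fun _ => 1) <= sbm_modularity n nl p lstar K.
Proof.
move=> nl_ge4 p_bounds n_large K_red K_suit [T0 [T0Lp KT0_gt0]].
have nl_gt1 l : (1 < nl l)%N by apply: leq_trans (nl_ge4 l).
have inv20_gt0 : 0 < 20%:R^-1 :> R by rewrite invr_gt0 ltr0n.
have p01 l : 0 <= p l <= 1 by have /andP[] := p_bounds l; lra.
have p_gt0 : 0 < p lstar by have /andP[] := p_bounds lstar; lra.
have K_ge0 (T : {set Lay}) : T \subset [set: Lay] :\ lstar -> 0 <= K T.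
  by case/K_red/andP.
have n_gt0 : (0 < n)%N.
  by apply: leq_trans n_large; rewrite muln_gt0 prodn_gt0 // => l; rewrite ltnW.
apply: ler_sbm_modularity; rewrite ?edge_exp_outside_ge0 //.
- by apply: edge_exp_inside_gt0 => //; exists T0.
- by apply: edge_exp_inside_gt0 => //; exists T0.
- by apply: edge_exp_ratio_le; rewrite ?ltW.
Qed.
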